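(* Let $\kappa$ and $\lambda$ be infinite cardinals with $cf(\kappa)\leq\lambda<\kappa$. Let $\mathbb{W}=\{-1\}\cup\kappa$, ordered by declaring $-1$ smaller than every ordinal and ordering $\kappa$ as ordinals. Let $X=\{f\in\mathbb{W}^{\lambda^+}: supp(f)<\lambda^+\}$, where $supp(f)=\min\{\gamma<\lambda^+: f(\alpha)=0 \text{ for every } \alpha\geq\gamma\}$, with the order topology of the lexicographic order. Then $X$ is a strong Choquet (hence Baire), non-archimedean (hence hereditarily paracompact) LOTS, and $dis(X)\leq\lambda^+<\kappa<\Delta(X)$.
   Context: A LOTS is a linearly ordered set with its order topology. A space is non-archimedean if it has a base such that any two elements are either disjoint or one contains the other. A space is strong Choquet if player II has a winning strategy in the strong Choquet game (player I plays an open set $B_n$ and a point $f_n\in B_n$, with $B_n\subseteq A_{n-1}$; player II plays an open $A_n$ with $f_n\in A_n\subseteq B_n$; II wins if $\bigcap_n A_n\neq\emptyset$). $dis(X)$ is the least number of discrete subspaces needed to cover $X$; $\Delta(X)$ is the least cardinality of a non-empty open subset of $X$. *)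

(* ordinals/cardinals modelled by well-ordered types;
   cardinal comparison via injections. *)
From Stdlib Require Import List Arith.

Definition injective {A B : Type} (f : A -> B) : Prop :=
  forall x y, f x = f y -> x = y.

Definition card_le (A B : Type) : Prop := exists f : A -> B, injective f.
Definition card_lt (A B : Type) : Prop := card_le A B /\ ~ card_le B A.

Definition well_order {T : Type} (R : T -> T -> Prop) : Prop :=
  (forall x, ~ R x x) /\
  (forall x y z, R x y -> R y z -> R x z) /\
  (forall x y, R x y \/ x = y \/ R y x) /\
  well_founded R.

Definition segment {T : Type} (R : T -> T -> Prop) (x : T) : Type :=
  { y : T | R y x }.

(* (T,R) is an infinite cardinal, i.e. an infinite initial ordinal *)
Definition infinite_cardinal {T : Type} (R : T -> T -> Prop) : Prop :=
  well_order R /\ card_le nat T /\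
  forall x : T, ~ card_le T (segment R x).

(* (Tp,Rp) is (the order type of) the successor cardinal of the type L:
   |Tp| > |L| and every proper initial segment has size <= |L|. *)
Definition successor_cardinal_of (L : Type) {Tp : Type} (Rp : Tp -> Tp -> Prop) : Prop :=
  well_order Rp /\ card_lt L Tp /\
  forall x : Tp, card_le (segment Rp x) L.

(* cf(K,R) <= |L| : there is a cofinal map from L into K *)
Definition cof_le {K : Type} (R : K -> K -> Prop) (L : Type) : Prop :=
  exists g : L -> K, forall x : K, exists i : L, R x (g i) \/ x = g i.

(* W = {-1} ∪ kappa : None plays -1 *)
Definition Wlt {K : Type} (R : K -> K -> Prop) (a b : option K) : Prop :=
  match a, b with
  | None, Some _ => True
  | Some x, Some y => R x y
  | _, _ => False
  end.

Definition is_zero {K : Type} (R : K -> K -> Prop) (k : K) : Prop :=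
  forall y, ~ R y k.

(* supp(f) < lambda^+ : f vanishes from some gamma on *)
Definition bounded_support {K Lp : Type} (R : K -> K -> Prop) (Rp : Lp -> Lp -> Prop)
  (f : Lp -> option K) : Prop :=
  exists gamma : Lp, forall alpha : Lp, ~ Rp alpha gamma ->
    exists z, f alpha = Some z /\ is_zero R z.

Definition Xspace {K Lp : Type} (R : K -> K -> Prop) (Rp : Lp -> Lp -> Prop) : Type :=
  { f : Lp -> option K | bounded_support R Rp f }.

Definition lex_lt {K Lp : Type} (R : K -> K -> Prop) (Rp : Lp -> Lp -> Prop)
  (f g : Xspace R Rp) : Prop :=
  exists alpha : Lp,
    (forall beta, Rp beta alpha -> proj1_sig f beta = proj1_sig g beta) /\
    Wlt R (proj1_sig f alpha) (proj1_sig g alpha).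

Definition strict_linear_order {T : Type} (lt : T -> T -> Prop) : Prop :=
  (forall x, ~ lt x x) /\
  (forall x y z, lt x y -> lt y z -> lt x z) /\
  (forall x y, lt x y \/ x = y \/ lt y x).

(* open interval (a,b), None meaning an unbounded end *)
Definition in_interval {T : Type} (lt : T -> T -> Prop) (a b : option T) (x : T) : Prop :=
  (match a with None => True | Some a' => lt a' x end) /\
  (match b with None => True | Some b' => lt x b' end).

Definition ord_open {T : Type} (lt : T -> T -> Prop) (U : T -> Prop) : Prop :=
  forall x, U x -> exists a b : option T,
    in_interval lt a b x /\ forall y, in_interval lt a b y -> U y.

Definition subset {T : Type} (A B : T -> Prop) : Prop := forall x, A x -> B x.

Definition nonempty {T : Type} (A : T -> Prop) : Prop := exists x, A x.

Definition non_archimedean {T : Type} (op : (T -> Prop) -> Prop) : Prop :=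
  exists Bs : (T -> Prop) -> Prop,
    (forall B, Bs B -> op B) /\
    (forall U x, op U -> U x -> exists B, Bs B /\ B x /\ subset B U) /\
    (forall B1 B2, Bs B1 -> Bs B2 ->
       (forall x, ~ (B1 x /\ B2 x)) \/ subset B1 B2 \/ subset B2 B1).

(* strong Choquet game. Player I's moves are pairs (B_n, f_n).
   A strategy for II maps the list of I's moves so far (B_0,f_0),...,(B_n,f_n)
   to II's answer A_n. *)
Definition choquet_strategy (T : Type) : Type := list ((T -> Prop) * T) -> (T -> Prop).

Definition history {T : Type} (b : nat -> (T -> Prop) * T) (n : nat) : list ((T -> Prop) * T) :=
  map b (seq 0 (S n)).

Definition answer {T : Type} (s : choquet_strategy T) (b : nat -> (T -> Prop) * T) (n : nat)
  : T -> Prop := s (history b n).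

Definition legal_I {T : Type} (op : (T -> Prop) -> Prop) (s : choquet_strategy T)
  (b : nat -> (T -> Prop) * T) (n : nat) : Prop :=
  op (fst (b n)) /\ fst (b n) (snd (b n)) /\
  (forall m, n = S m -> subset (fst (b n)) (answer s b m)).

Definition strong_choquet {T : Type} (op : (T -> Prop) -> Prop) : Prop :=
  exists s : choquet_strategy T,
    (forall b n, (forall k, k <= n -> legal_I op s b k) ->
       op (answer s b n) /\ answer s b n (snd (b n)) /\ subset (answer s b n) (fst (b n))) /\
    (forall b, (forall n, legal_I op s b n) ->
       exists x, forall n, answer s b n x).

Definition dense {T : Type} (op : (T -> Prop) -> Prop) (D : T -> Prop) : Prop :=
  forall U, op U -> nonempty U -> exists x, U x /\ D x.

Definition baire {T : Type} (op : (T -> Prop) -> Prop) : Prop :=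
  forall D : nat -> T -> Prop, (forall n, op (D n) /\ dense op (D n)) ->
    dense op (fun x => forall n, D n x).

Definition discrete_subspace {T : Type} (op : (T -> Prop) -> Prop) (D : T -> Prop) : Prop :=
  forall x, D x -> exists U, op U /\ U x /\ forall y, U y -> D y -> y = x.

Definition dis_le {T : Type} (op : (T -> Prop) -> Prop) (I : Type) : Prop :=
  exists D : I -> T -> Prop,
    (forall i, discrete_subspace op (D i)) /\ (forall x, exists i, D i x).

Definition card_lt_Delta {T : Type} (op : (T -> Prop) -> Prop) (K : Type) : Prop :=
  forall U, op U -> nonempty U -> card_lt K { x : T | U x }.

From Stdlib Require Import List Arith Lia Classical ClassicalEpsilon ChoiceFacts
  FunctionalExtensionality ProofIrrelevance Wellfounded.

(* Cones [{g | g agrees with f up to alpha}] are clopen and any two are nested or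
   disjoint, so they form a non-archimedean base. The points whose support lies below
   [gamma] form a discrete set, each being alone in its cone of radius [gamma]; hence
   [dis(X) <= lambda^+]. As [cf(lambda^+) > omega], countably many radii are bounded, so
   the centres of a decreasing sequence of cones glue, padded with zeros, to a point of
   all of them: this wins the strong Choquet game and gives Baire. Every cone contains a
   copy of [kappa^lambda], obtained by varying [lambda] coordinates past the support,
   and [kappa^lambda > kappa] by Koenig's theorem since [cf(kappa) <= lambda]; hence
   [Delta(X) > kappa]. Finally [lambda^+ <= kappa] by comparing well-orders, and
   [kappa <> lambda^+] because a cofinal [lambda]-sequence of segments of size
   [<= lambda] would give [|kappa| <= lambda * lambda = lambda] (Hessenberg). *)

(** * Cardinal comparison of types *)

Lemma proj1_sig_inj {A} {P : A -> Prop} (a b : {x | P x}) :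
  proj1_sig a = proj1_sig b -> a = b.
Proof. destruct a, b; simpl; intros ->; f_equal; apply proof_irrelevance. Qed.

Lemma dependent_functional_choice {A} {B : A -> Type} (P : forall a, B a -> Prop) :
  (forall a, exists b, P a b) -> exists f : forall a, B a, forall a, P a (f a).
Proof. exact (non_dep_dep_functional_choice choice B P). Qed.

Lemma card_le_refl A : card_le A A.
Proof. exists (fun x => x); intros x y h; exact h. Qed.

Lemma card_le_trans A B C : card_le A B -> card_le B C -> card_le A C.
Proof. intros [f hf] [g hg]; exists (fun x => g (f x)); intros x y h; apply hf, hg, h. Qed.

Lemma card_le_prod A B C D : card_le A C -> card_le B D -> card_le (A * B) (C * D).
Proof.
  intros [f hf] [g hg]; exists (fun p => (f (fst p), g (snd p))).
  intros [a b] [c d] h; injection h; intros; f_equal; auto.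
Qed.

Lemma card_le_option A B : card_le A B -> card_le (option A) (option B).
Proof.
  intros [f hf]; exists (option_map f).
  intros [a|] [b|] h; try discriminate; auto; injection h; intro; f_equal; auto.
Qed.

Lemma card_le_sum A B C : card_le A C -> card_le B C -> card_le (A + B) (bool * C).
Proof.
  intros [f hf] [g hg].
  exists (fun x => match x with inl a => (true, f a) | inr b => (false, g b) end).
  intros [a|b] [a'|b'] e; injection e; intros; try discriminate; f_equal; auto.
Qed.

Lemma card_le_sig A (P : A -> Prop) : card_le {x | P x} A.
Proof. exists (@proj1_sig _ _); exact proj1_sig_inj. Qed.

Lemma card_le_of_surjective {A B} (f : A -> B) :
  (forall b, exists a, f a = b) -> card_le B A.
Proof.
  intros H; destruct (choice (fun b a => f a = b) H) as [g hg].
  exists g; intros x y h; rewrite <- (hg x), <- (hg y), h; reflexivity.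
Qed.

Lemma card_le_fun_const {A} (a : A) B : card_le B (A -> B).
Proof. exists (fun b _ => b); intros x y e; exact (f_equal (fun h => h a) e). Qed.

Lemma card_le_bool_nat : card_le bool nat.
Proof. exists (fun b : bool => if b then 0 else 1); intros [] [] e; auto; discriminate. Qed.

(* Hilbert's hotel: move every [i n] to [i (S n)] and fix the rest. *)
Definition shift {Y} (i : nat -> Y) (y : Y) : Y :=
  match excluded_middle_informative (exists n, i n = y) with
  | left H => i (S (proj1_sig (constructive_indefinite_description _ H)))
  | right _ => y
  end.

Lemma shift_in {Y} (i : nat -> Y) n : injective i -> shift i (i n) = i (S n).
Proof.
  intros hi; unfold shift; destruct excluded_middle_informative as [H|H]; [|exfalso; eauto].
  destruct (constructive_indefinite_description _ H) as [m hm]; simpl.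
  apply hi in hm; subst; reflexivity.
Qed.

Lemma shift_out {Y} (i : nat -> Y) y : (forall n, i n <> y) -> shift i y = y.
Proof.
  intros hn; unfold shift; destruct excluded_middle_informative as [[n H]|H]; auto.
  exfalso; eapply hn; eauto.
Qed.

Lemma in_range_or_not {Y} (i : nat -> Y) y : (exists n, i n = y) \/ forall n, i n <> y.
Proof. destruct (classic (exists n, i n = y)); auto; right; intros n e; eauto. Qed.

Lemma card_le_option_infinite Y : card_le nat Y -> card_le (option Y) Y.
Proof.
  intros [i hi]; exists (fun o => match o with None => i 0 | Some y => shift i y end).
  intros [a|] [b|] h.
  - destruct (in_range_or_not i a) as [[n <-]|Ha], (in_range_or_not i b) as [[m <-]|Hb].
    + rewrite !shift_in in h by auto; apply hi in h; injection h; intros ->; auto.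
    + rewrite shift_in, shift_out in h by auto; exfalso; eapply Hb; eauto.
    + rewrite shift_in, shift_out in h by auto; exfalso; eapply Ha; eauto.
    + rewrite !shift_out in h by auto; subst; auto.
  - destruct (in_range_or_not i a) as [[n <-]|Ha].
    + rewrite shift_in in h by auto; apply hi in h; discriminate.
    + rewrite shift_out in h by auto; exfalso; eapply Ha; eauto.
  - destruct (in_range_or_not i b) as [[n <-]|Hb].
    + rewrite shift_in in h by auto; apply hi in h; discriminate.
    + rewrite shift_out in h by auto; exfalso; eapply Hb; eauto.
  - reflexivity.
Qed.

(* [h] hits [None] at most once, so one of [h (2n)], [h (2n+1)] is a [Some]. *)
Lemma card_le_nat_of_option Y : card_le nat (option Y) -> card_le nat Y.
Proof.
  intros [h hh].
  assert (y0 : Y).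
  { destruct (h 0) as [y|] eqn:E0; [exact y|]. destruct (h 1) as [y|] eqn:E1; [exact y|].
    exfalso; rewrite <- E1 in E0; apply hh in E0; discriminate. }
  exists (fun n => match h (2*n) with Some y => y
                   | None => match h (2*n+1) with Some y => y | None => y0 end end).
  intros n m e.
  destruct (h (2*n)) as [a|] eqn:A; destruct (h (2*m)) as [b|] eqn:B.
  - subst; rewrite <- B in A; apply hh in A; lia.
  - destruct (h (2*m+1)) as [c|] eqn:C.
    + subst; rewrite <- C in A; apply hh in A; lia.
    + rewrite <- C in B; apply hh in B; lia.
  - destruct (h (2*n+1)) as [c|] eqn:C.
    + subst; rewrite <- C in B; apply hh in B; lia.
    + rewrite <- C in A; apply hh in A; lia.
  - rewrite <- B in A; apply hh in A; lia.
Qed.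

Lemma pigeonhole N (f : nat -> nat) : injective f -> ~ (forall n, f n < N).
Proof.
  revert f; induction N as [|N IH]; intros f hf hb.
  - specialize (hb 0); lia.
  - destruct (classic (exists i, f i = N)) as [[i0 Hi]|Hn].
    + apply (IH (fun n => f (if lt_dec n i0 then n else S n))).
      * intros x y h; destruct (lt_dec x i0), (lt_dec y i0); apply hf in h; lia.
      * intros n; set (m := if lt_dec n i0 then n else S n).
        assert (m <> i0) by (unfold m; destruct (lt_dec n i0); lia).
        assert (f m <> N) by (intro e; rewrite <- Hi in e; apply hf in e; auto).
        specialize (hb m); lia.
    + apply (IH f hf); intros n; specialize (hb n).
      assert (f n <> N) by (intro; apply Hn; eauto); lia.
Qed.

Lemma pair_code M a b c d : b < M -> d < M -> a * M + b = c * M + d -> a = c /\ b = d.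
Proof.
  intros hb hd e; assert (a = c) by (destruct (lt_eq_lt_dec a c) as [[l|l]|l]; auto; nia).
  subst; split; auto; lia.
Qed.

(** * Well-orders *)

Definition le_of {T} (R : T -> T -> Prop) (x y : T) : Prop := R x y \/ x = y.

Definition max_of {T} (R : T -> T -> Prop) (x y : T) : T :=
  if excluded_middle_informative (R x y) then y else x.

Section WellOrder.
Context {T : Type} (R : T -> T -> Prop) (wo : well_order R).

Lemma wo_irrefl x : ~ R x x.
Proof. exact (proj1 wo x). Qed.

Lemma wo_trans x y z : R x y -> R y z -> R x z.
Proof. exact (proj1 (proj2 wo) x y z). Qed.

Lemma wo_total x y : R x y \/ x = y \/ R y x.
Proof. exact (proj1 (proj2 (proj2 wo)) x y). Qed.

Lemma wo_wf : well_founded R.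
Proof. exact (proj2 (proj2 (proj2 wo))). Qed.

Lemma wo_le_trans x y z : le_of R x y -> le_of R y z -> le_of R x z.
Proof. intros [h| ->] [h'| ->]; unfold le_of; eauto using wo_trans. Qed.

Lemma wo_le_lt_trans x y z : le_of R x y -> R y z -> R x z.
Proof. intros [h| ->] h'; eauto using wo_trans. Qed.

Lemma wo_lt_le_trans x y z : R x y -> le_of R y z -> R x z.
Proof. intros h [h'| ->]; eauto using wo_trans. Qed.

Lemma wo_not_lt_le x y : ~ R x y -> le_of R y x.
Proof. intros h; destruct (wo_total x y) as [l|[e|l]]; unfold le_of; auto; contradiction. Qed.

Lemma wo_lt_not_le x y : R x y -> ~ le_of R y x.
Proof. intros h [h'| ->]; eapply wo_irrefl; eauto using wo_trans. Qed.

Lemma le_max_of_l x y : le_of R x (max_of R x y).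
Proof. unfold max_of, le_of; destruct excluded_middle_informative; auto. Qed.

Lemma le_max_of_r x y : le_of R y (max_of R x y).
Proof.
  unfold max_of; destruct excluded_middle_informative as [h|h]; [right; auto|].
  apply wo_not_lt_le, h.
Qed.

Lemma wo_minimal (P : T -> Prop) :
  (exists x, P x) -> exists x, P x /\ forall y, R y x -> ~ P y.
Proof.
  intros [x Px]; revert Px; induction x as [x IH] using (well_founded_ind wo_wf); intros Px.
  destruct (classic (exists y, R y x /\ P y)) as [[y [Ry Py]]|N]; [exact (IH y Ry Py)|].
  exists x; split; auto; intros y Ry Py; apply N; eauto.
Qed.

Lemma monotone_injective {B} (RB : B -> B -> Prop) (f : T -> B) :
  (forall x, ~ RB x x) -> (forall x y, R x y -> RB (f x) (f y)) -> injective f.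
Proof.
  intros irr mono x y h; destruct (wo_total x y) as [l|[e|l]]; auto;
    apply mono in l; rewrite h in l; exfalso; eapply irr; eauto.
Qed.

Lemma well_order_sig (P : T -> Prop) :
  well_order (fun a b : {x | P x} => R (proj1_sig a) (proj1_sig b)).
Proof.
  split; [|split; [|split]].
  - intros x; apply wo_irrefl.
  - intros x y z; apply wo_trans.
  - intros x y; destruct (wo_total (proj1_sig x) (proj1_sig y)) as [l|[e|l]]; auto.
    right; left; apply proj1_sig_inj, e.
  - apply (wf_inverse_image _ _ R (@proj1_sig _ _) wo_wf).
Qed.

Lemma well_order_inverse_image {A} (key : A -> T) :
  injective key -> well_order (fun x y => R (key x) (key y)).
Proof.
  intros hk; split; [|split; [|split]].
  - intros x; apply wo_irrefl.
  - intros x y z; apply wo_trans.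
  - intros x y; destruct (wo_total (key x) (key y)) as [l|[e|l]]; auto.
  - apply (wf_inverse_image _ _ R key wo_wf).
Qed.

Definition below_or_none (a b : T) : option (segment R a) :=
  match excluded_middle_informative (R b a) with
  | left h => Some (exist _ b h)
  | right _ => None
  end.

Lemma below_or_none_inj a b c :
  le_of R b a -> le_of R c a -> below_or_none a b = below_or_none a c -> b = c.
Proof.
  unfold below_or_none; intros hb hc.
  destruct excluded_middle_informative as [h1|h1];
    destruct excluded_middle_informative as [h2|h2]; intros e; try discriminate.
  - injection e; auto.
  - destruct hb as [hb|hb]; [contradiction|]; destruct hc as [hc|hc]; [contradiction|].
    congruence.
Qed.

Lemma card_le_initial_segment a :
  card_le {b | le_of R b a} (option (segment R a)).
Proof.
  exists (fun b => below_or_none a (proj1_sig b)).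
  intros [x hx] [y hy] e; apply proj1_sig_inj, (below_or_none_inj a); auto.
Qed.

End WellOrder.

Arguments wo_irrefl {T R}.
Arguments wo_trans {T R}.
Arguments wo_total {T R}.
Arguments wo_wf {T R}.

Definition lex {A B} (RA : A -> A -> Prop) (RB : B -> B -> Prop) (p q : A * B) : Prop :=
  RA (fst p) (fst q) \/ (fst p = fst q /\ RB (snd p) (snd q)).

Lemma well_order_lex {A B} (RA : A -> A -> Prop) (RB : B -> B -> Prop) :
  well_order RA -> well_order RB -> well_order (lex RA RB).
Proof.
  intros [irA [trA [totA wfA]]] [irB [trB [totB wfB]]]; unfold lex; split; [|split; [|split]].
  - intros [a b] [h|[_ h]]; simpl in *; [apply (irA a)|apply (irB b)]; auto.
  - intros [a b] [c d] [e g]; simpl; intros [h|[-> h]] [h'|[-> h']]; eauto.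
  - intros [a b] [c d]; simpl; destruct (totA a c) as [l|[->|l]]; auto.
    destruct (totB b d) as [l|[->|l]]; auto.
  - intros [a b]; revert b; induction a as [a IHa] using (well_founded_ind wfA).
    intros b; induction b as [b IHb] using (well_founded_ind wfB).
    constructor; intros [c d]; simpl; intros [h|[-> h]]; auto.
Qed.

Lemma well_order_lt : well_order lt.
Proof.
  split; [|split; [|split]]; [intros; lia|intros; lia| |apply lt_wf].
  intros x y; destruct (lt_eq_lt_dec x y) as [[]|]; auto.
Qed.

(** * Comparing two well-orders *)

Section Comparison.
Variables (A B : Type) (RA : A -> A -> Prop) (RB : B -> B -> Prop).
Hypotheses (woA : well_order RA) (woB : well_order RB).

Definition strict_ub {x : A} (rec : forall y, RA y x -> option B) (b : B) : Prop :=
  forall y (h : RA y x), exists c, rec y h = Some c /\ RB c b.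

(* The rank of [x] is the least strict upper bound of the ranks below [x], if any. *)
Definition rank_step (x : A) (rec : forall y, RA y x -> option B) : option B :=
  match excluded_middle_informative
          (exists b, strict_ub rec b /\ forall b', RB b' b -> ~ strict_ub rec b') with
  | left H => Some (proj1_sig (constructive_indefinite_description _ H))
  | right _ => None
  end.

Definition rank : A -> option B := Fix (wo_wf woA) (fun _ => option B) rank_step.

Lemma rank_unfold x : rank x = rank_step x (fun y _ => rank y).
Proof.
  apply (Fix_eq (wo_wf woA) (fun _ => option B) rank_step).
  intros x0 g1 g2 Hg.
  replace g2 with g1; [reflexivity|].
  apply functional_extensionality_dep; intro y; apply functional_extensionality_dep; apply Hg.
Qed.

Definition above_ranks (x : A) (b : B) : Prop :=
  forall y, RA y x -> exists c, rank y = Some c /\ RB c b.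

Lemma rank_spec x :
  (rank x = None /\ forall b, ~ above_ranks x b) \/
  (exists c, rank x = Some c /\ above_ranks x c /\ forall b, RB b c -> ~ above_ranks x b).
Proof.
  rewrite rank_unfold; unfold rank_step; destruct excluded_middle_informative as [H|H].
  - right; destruct (constructive_indefinite_description _ H) as [c [Pc Pm]]; simpl.
    exists c; split; [reflexivity|split]; [exact Pc|].
    intros b hb Qb; apply (Pm b hb); exact Qb.
  - left; split; auto; intros b Qb; apply H.
    destruct (wo_minimal _ woB (above_ranks x) (ex_intro _ b Qb)) as [c [Qc Mc]].
    exists c; split; [exact Qc|]; intros b' hb' Qb'; exact (Mc b' hb' Qb').
Qed.

Lemma rank_lt x y c : RA x y -> rank y = Some c -> exists c', rank x = Some c' /\ RB c' c.
Proof.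
  intros hxy hy; destruct (rank_spec y) as [[N _]|[c' [E [Qc _]]]]; [congruence|].
  rewrite hy in E; injection E; intros <-; exact (Qc x hxy).
Qed.

(* A value missed by the ranks below [x] cannot lie under any of them: otherwise it
   would undercut the least bound defining that rank. *)
Lemma missed_value_above_ranks x :
  (forall y, RA y x -> rank y <> None) ->
  forall b, ~ (exists z, RA z x /\ rank z = Some b) -> above_ranks x b.
Proof.
  induction x as [x IH] using (well_founded_ind (wo_wf woA)); intros Hd b Nb y hy.
  destruct (rank y) as [c|] eqn:Ey; [|exfalso; exact (Hd y hy Ey)].
  exists c; split; [reflexivity|].
  destruct (wo_total woB c b) as [l|[<-|l]]; [exact l|exfalso; apply Nb; eauto|exfalso].
  destruct (rank_spec y) as [[N _]|[c' [E [_ M]]]]; [congruence|].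
  rewrite Ey in E; injection E as <-; apply (M b l), IH; [exact hy| |].
  - intros y' hy'; apply Hd; exact (wo_trans woA _ _ _ hy' hy).
  - intros [z [hz1 hz2]]; apply Nb; exists z; split; [exact (wo_trans woA _ _ _ hz1 hy)|exact hz2].
Qed.

Lemma below_rank_attained x :
  (forall y, RA y x -> rank y <> None) -> forall c, rank x = Some c ->
  forall b, RB b c -> exists z, RA z x /\ rank z = Some b.
Proof.
  intros Hd c Hc b hb; apply NNPP; intros N.
  destruct (rank_spec x) as [[E _]|[c' [E [_ M]]]]; [congruence|].
  rewrite Hc in E; injection E as <-.
  exact (M b hb (missed_value_above_ranks x Hd b N)).
Qed.

Lemma rank_total_embedding :
  (forall x, rank x <> None) ->
  exists f : A -> B, (forall x y, RA x y -> RB (f x) (f y)) /\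
    ((forall b, exists a, f a = b) \/ exists b, forall a, RB (f a) b).
Proof.
  intros All.
  assert (Hg : forall x, exists c, rank x = Some c).
  { intros x; destruct (rank x) eqn:E; [eauto|exfalso; eapply All; eauto]. }
  destruct (choice _ Hg) as [g hg]; exists g; split.
  - intros x y hxy; destruct (rank_lt x y (g y) hxy (hg y)) as [c [E R]].
    rewrite hg in E; congruence.
  - destruct (classic (forall b, exists a, g a = b)) as [S|S]; [left; exact S|right].
    apply not_all_ex_not in S; destruct S as [b0 S]; exists b0; intros a.
    destruct (wo_total woB (g a) b0) as [l|[e|l]]; auto; exfalso; apply S.
    + eauto.
    + destruct (below_rank_attained a (fun y _ => All y) (g a) (hg a) b0 l) as [z [_ hz]].
      exists z; rewrite hg in hz; congruence.
Qed.

Lemma rank_undefined_segment x0 :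
  rank x0 = None -> (forall y, RA y x0 -> rank y <> None) -> card_le B (segment RA x0).
Proof.
  intros N0 M0.
  assert (Hall : forall b, exists y, RA y x0 /\ rank y = Some b).
  { intros b; apply NNPP; intros N.
    destruct (rank_spec x0) as [[_ NQ]|[c [E _]]]; [|congruence].
    exact (NQ b (missed_value_above_ranks x0 M0 b N)). }
  destruct (choice _ Hall) as [h hh].
  exists (fun b => exist _ (h b) (proj1 (hh b))); intros b b' e.
  injection e; intro e'; pose proof (proj2 (hh b)) as E1; pose proof (proj2 (hh b')) as E2.
  rewrite e' in E1; congruence.
Qed.

Theorem well_order_comparable :
  (exists f : A -> B, (forall x y, RA x y -> RB (f x) (f y)) /\
     ((forall b, exists a, f a = b) \/ exists b, forall a, RB (f a) b))
  \/ exists a, card_le B (segment RA a).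
Proof.
  destruct (classic (forall x, rank x <> None)) as [All|NAll].
  - left; exact (rank_total_embedding All).
  - right; apply not_all_not_ex in NAll.
    destruct (wo_minimal _ woA (fun x => rank x = None) NAll) as [x0 [N0 M0]].
    exists x0; exact (rank_undefined_segment x0 N0 M0).
Qed.

End Comparison.

Lemma card_le_of_well_order_le {A B} (RA : A -> A -> Prop) (RB : B -> B -> Prop) :
  well_order RA -> well_order RB -> ~ (exists a, card_le B (segment RA a)) -> card_le A B.
Proof.
  intros woA woB N.
  destruct (well_order_comparable A B RA RB woA woB) as [[f [mono _]]|H]; [|contradiction].
  exists f; apply (monotone_injective _ woA RB); auto; apply (wo_irrefl woB).
Qed.

Lemma finite_well_order_bounded {Y} (RY : Y -> Y -> Prop) :
  well_order RY -> ~ card_le nat Y -> exists n (h : Y -> nat), injective h /\ forall y, h y < n.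
Proof.
  intros wo N.
  destruct (well_order_comparable _ _ RY lt wo well_order_lt) as [[f [mono [S|[b B]]]]|[a Ha]].
  - exfalso; apply N, (card_le_of_surjective f S).
  - exists b, f; split; auto; apply (monotone_injective _ wo lt); auto; intros; lia.
  - exfalso; apply N; eapply card_le_trans; [exact Ha|apply card_le_sig].
Qed.

(** * Hessenberg's theorem *)

Lemma card_le_nat_of_square_option {Y} (RY : Y -> Y -> Prop) :
  well_order RY -> card_le nat (option Y * option Y) -> card_le nat Y.
Proof.
  intros wo [g hg]; apply NNPP; intro Fin.
  destruct (finite_well_order_bounded RY wo Fin) as [n [h [hi hb]]].
  pose (k := fun o : option Y => match o with Some y => h y | None => n end).
  assert (kb : forall o, k o < S n) by (intros [a|]; simpl; [specialize (hb a)|]; lia).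
  assert (kinj : injective k).
  { intros [a|] [b|]; simpl; intros e; auto.
    - f_equal; apply hi, e.
    - specialize (hb a); lia.
    - specialize (hb b); lia. }
  apply (pigeonhole (S n * S n) (fun i => k (fst (g i)) * S n + k (snd (g i)))).
  - intros i j e; apply pair_code in e; [|apply kb|apply kb]; destruct e as [e1 e2].
    apply hg; destruct (g i), (g j); simpl in *; f_equal; apply kinj; auto.
  - intros i; pose proof (kb (fst (g i))); pose proof (kb (snd (g i))); nia.
Qed.

Section Square.
Variables (T : Type) (R : T -> T -> Prop).
Hypothesis wo : well_order R.
Variable P : T -> Prop.

Let W := {z | P z}.
Let RW (a b : W) : Prop := R (proj1_sig a) (proj1_sig b).

(* Goedel's ordering of pairs: first by their maximum, then lexicographically. *)
Let max_key (p : W * W) : W * (W * W) := (max_of RW (fst p) (snd p), p).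
Let max_lex (p q : W * W) : Prop := lex RW (lex RW RW) (max_key p) (max_key q).

Lemma well_order_max_lex : well_order max_lex.
Proof.
  pose proof (well_order_sig _ wo P) as woW.
  apply (well_order_inverse_image _ (well_order_lex _ _ woW (well_order_lex _ _ woW woW))).
  intros p q h; injection h; auto.
Qed.

Lemma card_le_max_lex_segment (p : W * W) :
  let m := proj1_sig (max_of RW (fst p) (snd p)) in
  card_le (segment max_lex p) (option (segment R m) * option (segment R m)).
Proof.
  pose proof (well_order_sig _ wo P) as woW; intros m.
  exists (fun q => (below_or_none R m (proj1_sig (fst (proj1_sig q))),
                    below_or_none R m (proj1_sig (snd (proj1_sig q))))).
  assert (bnd : forall q : segment max_lex p,
             le_of R (proj1_sig (fst (proj1_sig q))) m /\ le_of R (proj1_sig (snd (proj1_sig q))) m).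
  { intros [[a b] hq]; simpl.
    assert (hm : le_of RW (max_of RW a b) (max_of RW (fst p) (snd p))).
    { destruct hq as [h|[h _]]; [left; exact h|right; exact h]. }
    assert (ha := wo_le_trans _ woW _ _ _ (le_max_of_l RW a b) hm).
    assert (hb := wo_le_trans _ woW _ _ _ (le_max_of_r _ woW a b) hm).
    split; [destruct ha as [h| ->]|destruct hb as [h| ->]]; unfold le_of; auto. }
  intros q1 q2 e; injection e; intros e2 e1.
  destruct (bnd q1), (bnd q2).
  apply (below_or_none_inj R) in e1; auto; apply (below_or_none_inj R) in e2; auto.
  destruct q1 as [[a1 b1] h1], q2 as [[a2 b2] h2]; simpl in *.
  apply proj1_sig_inj; simpl; f_equal; apply proj1_sig_inj; assumption.
Qed.

(* Otherwise [W] injects into a [max_lex]-segment, hence into the square of an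
   [R]-segment below a point of [W]; that segment is finite or absorbs its square. *)
Lemma card_le_square_sig :
  card_le nat W ->
  (forall x, P x -> ~ card_le W (segment R x)) ->
  (forall x, P x -> card_le nat (segment R x) ->
     card_le (segment R x * segment R x) (segment R x)) ->
  card_le (W * W) W.
Proof.
  intros Hnat Hcard IH.
  pose proof (well_order_sig _ wo P) as woW.
  apply (card_le_of_well_order_le _ RW well_order_max_lex woW); intros [p Hp].
  pose proof (card_le_trans _ _ _ Hp (card_le_max_lex_segment p)) as HW.
  set (m := max_of RW (fst p) (snd p)) in HW.
  destruct (classic (card_le nat (segment R (proj1_sig m)))) as [Inf|Fin].
  - apply (Hcard (proj1_sig m) (proj2_sig m)).
    eapply card_le_trans; [exact HW|].
    eapply card_le_trans; [apply card_le_prod; apply card_le_option_infinite; exact Inf|].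
    apply IH; [exact (proj2_sig m)|exact Inf].
  - apply Fin, (card_le_nat_of_square_option _ (well_order_sig _ wo _)).
    exact (card_le_trans _ _ _ Hnat HW).
Qed.

End Square.

(* Hessenberg: by induction on [x], every infinite initial segment absorbs its square. *)
Theorem card_le_square {T} (R : T -> T -> Prop) :
  well_order R -> card_le nat T -> (forall x, ~ card_le T (segment R x)) -> card_le (T * T) T.
Proof.
  intros wo Hn Hc.
  assert (Hseg : forall x, card_le nat (segment R x) ->
            card_le (segment R x * segment R x) (segment R x)).
  { intros x; induction x as [x IH] using (well_founded_ind (wo_wf wo)); intros Hx.
    destruct (classic (exists y, R y x /\ card_le (segment R x) (segment R y)))
      as [[y [ryx Hc']]|N].
    - assert (inc : card_le (segment R y) (segment R x)).
      { exists (fun z => exist (fun w => R w x) (proj1_sig z) (wo_trans wo _ _ _ (proj2_sig z) ryx)).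
        intros a b e; injection e; intros; apply proj1_sig_inj; auto. }
      eapply card_le_trans; [apply card_le_prod; exact Hc'|].
      eapply card_le_trans; [apply IH; [exact ryx|eapply card_le_trans; eauto]|exact inc].
    - apply (card_le_square_sig _ R wo (fun z => R z x)); auto.
      intros y hy hc; apply N; eauto. }
  assert (eT : card_le T {z : T | True}).
  { exists (fun z => exist _ z I); intros a b e; injection e; auto. }
  eapply card_le_trans; [apply card_le_prod; exact eT|].
  eapply card_le_trans; [apply (card_le_square_sig _ R wo (fun _ => True))|apply card_le_sig].
  - eapply card_le_trans; eauto.
  - intros x _ h; apply (Hc x); eapply card_le_trans; eauto.
  - intros x _; apply Hseg.
Qed.

(** * Infinite and successor cardinals *)

Section InfiniteCardinal.
Context {L : Type} (RL : L -> L -> Prop) (hL : infinite_cardinal RL).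

Lemma card_le_nat_infinite : card_le nat L.
Proof. exact (proj1 (proj2 hL)). Qed.

Lemma card_le_square_infinite : card_le (L * L) L.
Proof. destruct hL as [wo [hn hc]]; exact (card_le_square RL wo hn hc). Qed.

Lemma card_le_bool_prod_infinite : card_le (bool * L) L.
Proof.
  eapply card_le_trans; [|exact card_le_square_infinite].
  apply card_le_prod; [|apply card_le_refl].
  exact (card_le_trans _ _ _ card_le_bool_nat card_le_nat_infinite).
Qed.

Lemma card_le_prod_option_infinite I : card_le I L -> card_le (I * option L) L.
Proof.
  intros hI; eapply card_le_trans; [|exact card_le_square_infinite].
  apply card_le_prod; [exact hI|exact (card_le_option_infinite _ card_le_nat_infinite)].
Qed.

Lemma not_card_le_option_segment x : ~ card_le L (option (segment RL x)).
Proof.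
  destruct hL as [wo [hn hc]]; intros h; apply (hc x).
  eapply card_le_trans; [exact h|]; apply card_le_option_infinite.
  apply card_le_nat_of_option; eapply card_le_trans; eauto.
Qed.

End InfiniteCardinal.

Lemma card_le_of_cofinal {T I Y} (R : T -> T -> Prop) (s : I -> T) :
  (forall x, exists i, le_of R x (s i)) -> (forall i, card_le (segment R (s i)) Y) ->
  card_le T (I * option Y).
Proof.
  intros cof hs.
  destruct (dependent_functional_choice (fun i (h : segment R (s i) -> Y) => injective h) hs) as [h hh].
  assert (Hq : forall x, exists q : I * option Y, (snd q = None /\ x = s (fst q)) \/
              exists p : R x (s (fst q)), snd q = Some (h (fst q) (exist _ x p))).
  { intros x; destruct (cof x) as [i [p|e]].
    - exists (i, Some (h i (exist _ x p))); right; exists p; reflexivity.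
    - exists (i, None); left; auto. }
  destruct (choice _ Hq) as [q hq]; exists q; intros x y e.
  pose proof (hq x) as H1; pose proof (hq y) as H2.
  destruct (q x) as [i o]; destruct (q y) as [j o']; simpl in *; injection e; intros; subst.
  destruct H1 as [[n1 e1]|[p1 e1]]; destruct H2 as [[n2 e2]|[p2 e2]]; try congruence.
  rewrite e1 in e2; injection e2; intro e3; apply hh in e3; injection e3; auto.
Qed.

(* Diagonalisation: fewer than [|K|] functions are coded below [g i], so some value
   [phi i] avoids all of them at [i]; then [phi] has no code. *)
Theorem konig {K L} (RK : K -> K -> Prop) :
  infinite_cardinal RK -> cof_le RK L -> ~ card_le (L -> K) K.
Proof.
  intros hK [g hg] [e he].
  assert (H : forall i, exists k, forall psi, le_of RK (e psi) (g i) -> psi i <> k).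
  { intros i; apply NNPP; intro N.
    assert (H2 : forall k, exists psi, le_of RK (e psi) (g i) /\ psi i = k).
    { intros k; apply NNPP; intro M; apply N; exists k; intros psi hp hk; apply M; eauto. }
    destruct (choice _ H2) as [ps hps].
    apply (not_card_le_option_segment RK hK (g i)).
    exists (fun k => below_or_none RK (g i) (e (ps k))).
    intros k k' ee; apply below_or_none_inj in ee; try apply hps; apply he in ee.
    rewrite <- (proj2 (hps k)), <- (proj2 (hps k')), ee; reflexivity. }
  destruct (choice _ H) as [phi hphi].
  destruct (hg (e phi)) as [i hi]; exact (hphi i phi hi eq_refl).
Qed.

Section SuccessorCardinal.
Context {L Lp : Type} (RL : L -> L -> Prop) (RLp : Lp -> Lp -> Prop).
Hypotheses (hL : infinite_cardinal RL) (hLp : successor_cardinal_of L RLp).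

Let woLp : well_order RLp := proj1 hLp.

Lemma successor_not_le : ~ card_le Lp L.
Proof. exact (proj2 (proj1 (proj2 hLp))). Qed.

Lemma successor_segment_le x : card_le (segment RLp x) L.
Proof. exact (proj2 (proj2 hLp) x). Qed.

Lemma card_le_initial_segment_successor a : card_le {b | le_of RLp b a} L.
Proof.
  eapply card_le_trans; [apply (card_le_initial_segment RLp a)|].
  eapply card_le_trans; [apply card_le_option, successor_segment_le|].
  exact (card_le_option_infinite _ (card_le_nat_infinite RL hL)).
Qed.

Lemma successor_no_max a : exists b, RLp a b.
Proof.
  apply NNPP; intro N; apply successor_not_le.
  eapply card_le_trans; [|exact (card_le_initial_segment_successor a)].
  exists (fun b => exist (fun b => le_of RLp b a) b (wo_not_lt_le _ woLp _ _ (fun h => N (ex_intro _ b h)))).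
  intros x y e; injection e; auto.
Qed.

Lemma successor_sequence_bounded (al : nat -> Lp) : exists b, forall n, RLp (al n) b.
Proof.
  apply NNPP; intro N; apply successor_not_le.
  assert (cof : forall b, exists n, le_of RLp b (al n)).
  { intros b; apply NNPP; intro M; apply N; exists b; intros n.
    destruct (wo_total woLp (al n) b) as [l|[e'|l]]; auto; exfalso; apply M;
      exists n; unfold le_of; auto. }
  eapply card_le_trans; [exact (card_le_of_cofinal RLp al cof (fun n => successor_segment_le (al n)))|].
  exact (card_le_prod_option_infinite RL hL _ (card_le_nat_infinite RL hL)).
Qed.

(* Above [a] there are still [lambda^+] points, so an order embedding of [lambda]
   into them is bounded. *)
Lemma successor_injection_above a :
  exists p : L -> Lp, injective p /\ (forall i, RLp a (p i)) /\ exists b, forall i, RLp (p i) b.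
Proof.
  pose proof (well_order_sig _ woLp (fun g => RLp a g)) as woA.
  assert (AL : ~ card_le {g | RLp a g} L).
  { intros hA; apply successor_not_le.
    eapply card_le_trans; [|exact (card_le_bool_prod_infinite RL hL)].
    eapply card_le_trans;
      [|exact (card_le_sum _ _ _ (card_le_initial_segment_successor a) hA)].
    exists (fun b => match excluded_middle_informative (RLp a b) with
                     | left h => inr (exist _ b h)
                     | right h => inl (exist (fun b => le_of RLp b a) b (wo_not_lt_le _ woLp _ _ h)) end).
    intros x y e.
    destruct excluded_middle_informative as [h1|h1];
      destruct excluded_middle_informative as [h2|h2]; try discriminate;
      injection e; auto. }
  destruct (well_order_comparable _ _ RL _ (proj1 hL) woA) as [[f [mono [S|[b B]]]]|[c Hc]].
  - exfalso; apply AL, (card_le_of_surjective f S).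
  - exists (fun i => proj1_sig (f i)); split; [|split].
    + intros i j e; apply proj1_sig_inj in e; revert e.
      apply (monotone_injective _ (proj1 hL) (fun x y => RLp (proj1_sig x) (proj1_sig y)) f); auto.
      intros x; apply (wo_irrefl woLp).
    + intros i; exact (proj2_sig (f i)).
    + exists (proj1_sig b); exact B.
  - exfalso; apply AL; eapply card_le_trans; [exact Hc|apply card_le_sig].
Qed.

Lemma card_le_successor {K} (RK : K -> K -> Prop) :
  well_order RK -> card_lt L K -> card_le Lp K.
Proof.
  intros woK [_ nle]; apply (card_le_of_well_order_le _ _ woLp woK).
  intros [a Ha]; apply nle; eapply card_le_trans; [exact Ha|apply successor_segment_le].
Qed.

(* If [|K| <= lambda^+], every initial segment of [K] has size [<= lambda], and a
   cofinal [lambda]-sequence then gives [|K| <= lambda]. *)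
Lemma not_card_le_successor {K} (RK : K -> K -> Prop) :
  infinite_cardinal RK -> cof_le RK L -> card_lt L K -> ~ card_le K Lp.
Proof.
  intros hK [g hg] [_ nle] e.
  assert (Hs : forall i, card_le (segment RK (g i)) L).
  { intros i.
    destruct (classic (exists a, card_le (segment RK (g i)) (segment RLp a))) as [[a Ha]|N].
    - exact (card_le_trans _ _ _ Ha (successor_segment_le a)).
    - exfalso; apply (proj2 (proj2 hK) (g i)).
      exact (card_le_trans _ _ _ e
               (card_le_of_well_order_le _ _ woLp (well_order_sig _ (proj1 hK) _) N)). }
  apply nle; eapply card_le_trans; [exact (card_le_of_cofinal RK g hg Hs)|].
  exact (card_le_prod_option_infinite RL hL _ (card_le_refl L)).
Qed.

End SuccessorCardinal.

(** * The lexicographic order on [X] *)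

Lemma is_zero_unique {K} (RK : K -> K -> Prop) :
  well_order RK -> forall z z', is_zero RK z -> is_zero RK z' -> z = z'.
Proof.
  intros wo z z' h h'; destruct (wo_total wo z z') as [l|[e|l]]; auto;
    [apply h' in l|apply h in l]; contradiction.
Qed.

Lemma is_zero_not_max {K} (RK : K -> K -> Prop) :
  infinite_cardinal RK -> forall z, is_zero RK z -> exists k, RK z k.
Proof.
  intros [wo [[i hi] _]] z hz.
  assert (hne : exists n, i n <> z).
  { destruct (classic (i 0 = z)) as [e|e]; [|eauto].
    exists 1; intros e'; rewrite <- e' in e; apply hi in e; discriminate. }
  destruct hne as [n hn]; exists (i n).
  destruct (wo_total wo z (i n)) as [l|[l|l]]; [exact l|congruence|apply hz in l; contradiction].
Qed.

Section Wlt.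
Context {K : Type} (RK : K -> K -> Prop) (woK : well_order RK).

Lemma Wlt_irrefl a : ~ Wlt RK a a.
Proof. destruct a; simpl; auto; apply (wo_irrefl woK). Qed.

Lemma Wlt_trans a b c : Wlt RK a b -> Wlt RK b c -> Wlt RK a c.
Proof. destruct a, b, c; simpl; try tauto; apply (wo_trans woK). Qed.

Lemma Wlt_total a b : Wlt RK a b \/ a = b \/ Wlt RK b a.
Proof.
  destruct a as [a|], b as [b|]; simpl; auto.
  destruct (wo_total woK a b) as [l|[->|l]]; auto.
Qed.

End Wlt.

Definition update {Lp V} (h : Lp -> V) (d : Lp) (v : V) : Lp -> V :=
  fun b => if excluded_middle_informative (b = d) then v else h b.

Lemma update_eq {Lp V} (h : Lp -> V) d v : update h d v d = v.
Proof. unfold update; destruct excluded_middle_informative; congruence. Qed.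

Lemma update_neq {Lp V} (h : Lp -> V) d v b : b <> d -> update h d v b = h b.
Proof. unfold update; destruct excluded_middle_informative; congruence. Qed.

Section Space.
Context {K Lp : Type} (RK : K -> K -> Prop) (RLp : Lp -> Lp -> Prop).
Hypotheses (woK : well_order RK) (woLp : well_order RLp).

Local Notation X := (Xspace RK RLp).
Local Notation lt := (lex_lt RK RLp).

Lemma Xspace_ext (f g : X) : (forall b, proj1_sig f b = proj1_sig g b) -> f = g.
Proof. intros h; apply proj1_sig_inj, functional_extensionality, h. Qed.

Lemma lex_lt_strict_linear_order : strict_linear_order lt.
Proof.
  split; [|split].
  - intros x [a [_ h]]; exact (Wlt_irrefl RK woK _ h).
  - intros x y z [a [ha1 ha2]] [b [hb1 hb2]].
    destruct (wo_total woLp a b) as [l|[<-|l]].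
    + exists a; split; [intros c hc; rewrite ha1 by auto; apply hb1, (wo_trans woLp _ a); auto|].
      rewrite <- (hb1 a l); exact ha2.
    + exists a; split; [intros c hc; rewrite ha1, hb1; auto|eapply Wlt_trans; eauto].
    + exists b; split; [intros c hc; rewrite ha1, hb1; [reflexivity|exact hc|exact (wo_trans woLp _ _ _ hc l)]|].
      rewrite (ha1 b l); exact hb2.
  - intros x y; destruct (classic (exists a, proj1_sig x a <> proj1_sig y a)) as [H|H].
    + destruct (wo_minimal _ woLp _ H) as [a [ha hm]].
      assert (agr : forall c, RLp c a -> proj1_sig x c = proj1_sig y c).
      { intros c hc; apply NNPP; eapply hm; eauto. }
      destruct (Wlt_total RK woK (proj1_sig x a) (proj1_sig y a)) as [l|[e|l]].
      * left; exists a; auto.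
      * contradiction.
      * right; right; exists a; split; auto; intros c hc; symmetry; auto.
    + right; left; apply Xspace_ext; intros a; apply NNPP; intro N; apply H; eauto.
Qed.

Lemma lex_between_agree (a y b h : X) d :
  lt a y -> lt y b ->
  (forall c, RLp c d -> proj1_sig a c = proj1_sig h c /\ proj1_sig b c = proj1_sig h c) ->
  forall c, RLp c d -> proj1_sig y c = proj1_sig h c.
Proof.
  intros [e1 [h1 w1]] [e2 [h2 w2]] hab c hc; pose proof (wo_trans woLp) as trL.
  destruct (classic (RLp e1 d)) as [l1|l1].
  2:{ rewrite <- h1; [apply hab; auto|].
      destruct (wo_not_lt_le _ woLp _ _ l1) as [l| ->]; eauto. }
  destruct (classic (RLp e2 d)) as [l2|l2].
  2:{ rewrite h2; [apply hab; auto|].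
      destruct (wo_not_lt_le _ woLp _ _ l2) as [l| ->]; eauto. }
  exfalso; destruct (hab e1 l1) as [a1 b1]; destruct (hab e2 l2) as [a2 b2].
  destruct (wo_total woLp e1 e2) as [l|[<-|l]].
  - rewrite (h2 e1 l), b1, <- a1 in w1; exact (Wlt_irrefl RK woK _ w1).
  - rewrite a1 in w1; rewrite b1 in w2; exact (Wlt_irrefl RK woK _ (Wlt_trans RK woK _ _ _ w1 w2)).
  - rewrite <- (h1 e2 l), a2, <- b2 in w2; exact (Wlt_irrefl RK woK _ w2).
Qed.

Definition cone (f : X) (al : Lp) (g : X) : Prop :=
  forall b, le_of RLp b al -> proj1_sig g b = proj1_sig f b.

Lemma cone_refl f al : cone f al f.
Proof. intros b _; reflexivity. Qed.

Lemma cone_sub f g al al' :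
  cone f al g -> le_of RLp al al' -> subset (cone g al') (cone f al).
Proof. intros hg hl x hx b hb; rewrite hx; [apply hg; auto|eapply wo_le_trans; eauto]. Qed.

Lemma cone_disjoint_or_sub f1 a1 f2 a2 : le_of RLp a1 a2 ->
  (forall x, ~ (cone f1 a1 x /\ cone f2 a2 x)) \/ subset (cone f2 a2) (cone f1 a1).
Proof.
  intros hl; destruct (classic (cone f1 a1 f2)) as [c|c]; [right; eapply cone_sub; eauto|].
  left; intros x [h1 h2]; apply c; intros b hb.
  rewrite <- (h2 b), (h1 b); auto; eapply wo_le_trans; eauto.
Qed.

Lemma cones_disjoint_or_nested f1 a1 f2 a2 :
  (forall x, ~ (cone f1 a1 x /\ cone f2 a2 x)) \/
  subset (cone f1 a1) (cone f2 a2) \/ subset (cone f2 a2) (cone f1 a1).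
Proof.
  destruct (wo_total woLp a1 a2) as [l|[<-|l]].
  - destruct (cone_disjoint_or_sub f1 a1 f2 a2 (or_introl l)); tauto.
  - destruct (cone_disjoint_or_sub f1 a1 f2 a1 (or_intror eq_refl)); tauto.
  - destruct (cone_disjoint_or_sub f2 a2 f1 a1 (or_introl l)) as [d|]; [left|tauto].
    intros x [h1 h2]; exact (d x (conj h2 h1)).
Qed.

Lemma open_contains_cone U f b0 :
  ord_open lt U -> U f -> exists al, le_of RLp b0 al /\ subset (cone f al) U.
Proof.
  intros hU hf; destruct (hU f hf) as [a [b [[ha hb] hab]]].
  assert (lo : exists e, forall g, cone f e g ->
            match a with None => True | Some a' => lt a' g end).
  { destruct a as [a'|]; [|exists b0; auto].
    destruct ha as [e [he1 he2]]; exists e; intros g hg; exists e; split.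
    - intros c hc; rewrite he1 by auto; symmetry; apply hg; left; auto.
    - rewrite (hg e (or_intror eq_refl)); exact he2. }
  assert (up : exists e, forall g, cone f e g ->
            match b with None => True | Some b' => lt g b' end).
  { destruct b as [b'|]; [|exists b0; auto].
    destruct hb as [e [he1 he2]]; exists e; intros g hg; exists e; split.
    - intros c hc; rewrite <- he1 by auto; apply hg; left; auto.
    - rewrite (hg e (or_intror eq_refl)); exact he2. }
  destruct lo as [e1 H1], up as [e2 H2].
  exists (max_of RLp b0 (max_of RLp e1 e2)); split; [apply le_max_of_l|].
  intros g hg; apply hab; split.
  - apply H1; eapply cone_sub; [apply cone_refl| |exact hg].
    eapply wo_le_trans; [eauto|apply le_max_of_l|apply le_max_of_r; auto].
  - apply H2; eapply cone_sub; [apply cone_refl| |exact hg].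
    eapply wo_le_trans; [eauto|apply le_max_of_r; auto|apply le_max_of_r; auto].
Qed.

End Space.

(** * Topology of [X] *)

Lemma ord_open_ext {T} (lt : T -> T -> Prop) (U V : T -> Prop) :
  (forall x, U x <-> V x) -> ord_open lt V -> ord_open lt U.
Proof.
  intros e hV x hx; destruct (hV x (proj1 (e x) hx)) as [a [b [h1 h2]]].
  exists a, b; split; auto; intros y hy; apply e; auto.
Qed.

Lemma decreasing_chain_subset {T} (C : nat -> T -> Prop) :
  (forall n, subset (C (S n)) (C n)) -> forall n m, n <= m -> subset (C m) (C n).
Proof. intros H n m l; induction l as [|m l IH]; intros x hx; [exact hx|apply IH, H, hx]. Qed.

Definition last_move_strategy {T} (resp : (T -> Prop) * T -> T -> Prop) : choquet_strategy T :=
  fun hist => match rev hist with nil => fun _ => True | q :: _ => resp q end.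

Lemma answer_last_move_strategy {T} (resp : (T -> Prop) * T -> T -> Prop) b n :
  answer (last_move_strategy resp) b n = resp (b n).
Proof.
  unfold answer, last_move_strategy, history.
  rewrite seq_S, map_app, rev_app_distr; reflexivity.
Qed.

Section Topology.
Context {K L Lp : Type} (RK : K -> K -> Prop) (RL : L -> L -> Prop) (RLp : Lp -> Lp -> Prop).
Hypotheses (hK : infinite_cardinal RK) (hL : infinite_cardinal RL)
  (hLp : successor_cardinal_of L RLp).

Let woK : well_order RK := proj1 hK.
Let woLp : well_order RLp := proj1 hLp.

Local Notation X := (Xspace RK RLp).
Local Notation lt := (lex_lt RK RLp).
Local Notation op := (ord_open (lex_lt RK RLp)).
Local Notation cone := (cone RK RLp).

Lemma bounded_support_update (h : X) g d e v :
  (forall b, ~ RLp b g -> exists z, proj1_sig h b = Some z /\ is_zero RK z) ->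
  le_of RLp g d -> RLp d e -> bounded_support RK RLp (update (proj1_sig h) d v).
Proof.
  intros hg hgd hde; exists e; intros b hb.
  rewrite update_neq by (intros ->; contradiction).
  apply hg; intros hbg; apply hb.
  exact (wo_trans woLp _ _ _ (wo_lt_le_trans _ woLp _ _ _ hbg hgd) hde).
Qed.

Lemma update_agrees_below (h : X) d v c : RLp c d -> update (proj1_sig h) d v c = proj1_sig h c.
Proof. intros hc; apply update_neq; intros ->; exact (wo_irrefl woLp d hc). Qed.

Lemma lex_lt_update_l (h : X) d v (s : bounded_support RK RLp (update (proj1_sig h) d v)) :
  Wlt RK v (proj1_sig h d) -> lt (exist _ _ s) h.
Proof.
  intros hv; exists d; simpl; split; [|rewrite update_eq; exact hv].
  intros c hc; apply update_agrees_below, hc.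
Qed.

Lemma lex_lt_update_r (h : X) d v (s : bounded_support RK RLp (update (proj1_sig h) d v)) :
  Wlt RK (proj1_sig h d) v -> lt h (exist _ _ s).
Proof.
  intros hv; exists d; simpl; split; [|rewrite update_eq; exact hv].
  intros c hc; symmetry; apply update_agrees_below, hc.
Qed.

(* Around [h], lower and raise its zero value at a coordinate [d] past [al] and past
   its support: every point in between agrees with [h] below [d]. *)
Lemma cone_open f al : op (cone f al).
Proof.
  intros h hh; destruct (proj2_sig h) as [g hg].
  destruct (successor_no_max RL RLp hL hLp (max_of RLp al g)) as [d hd].
  destruct (successor_no_max RL RLp hL hLp d) as [e he].
  assert (hgd : le_of RLp g d).
  { left; exact (wo_le_lt_trans _ woLp _ _ _ (le_max_of_r _ woLp al g) hd). }
  assert (hdg : ~ RLp d g) by (intros c; exact (wo_lt_not_le _ woLp _ _ c hgd)).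
  destruct (hg d hdg) as [z [hz1 hz2]].
  destruct (is_zero_not_max RK hK z hz2) as [k hk].
  pose (s := fun v => bounded_support_update h g d e v hg hgd he).
  exists (Some (exist _ _ (s None))), (Some (exist _ _ (s (Some k)))); split.
  - split; [apply lex_lt_update_l|apply lex_lt_update_r]; rewrite hz1; simpl; [exact I|exact hk].
  - intros y [ly uy] b hb.
    rewrite (lex_between_agree RK RLp woK woLp _ y _ h d ly uy).
    + apply hh, hb.
    + intros c hc; split; apply update_agrees_below, hc.
    + exact (wo_le_lt_trans _ woLp _ _ _ (wo_le_trans _ woLp _ _ _ hb (le_max_of_l RLp al g)) hd).
Qed.


Lemma zero_exists : exists z, is_zero RK z.
Proof.
  destruct (card_le_nat_infinite RK hK) as [i _].
  destruct (wo_minimal _ woK (fun _ => True) (ex_intro _ (i 0) I)) as [z [_ hz]].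
  exists z; intros y hy; exact (hz y hy I).
Qed.

(* Countably many radii are bounded in [lambda^+], so gluing the centres and padding
   with zeros stays in [X]. *)
Lemma nested_cones_meet (fs : nat -> X) (als : nat -> Lp) :
  (forall n m, n <= m -> cone (fs n) (als n) (fs m)) ->
  exists x, forall n, cone (fs n) (als n) x.
Proof.
  intros H.
  destruct (successor_sequence_bounded RL RLp hL hLp als) as [bd hbd].
  destruct zero_exists as [z0 hz0].
  pose (x := fun c => match excluded_middle_informative (exists n, le_of RLp c (als n)) with
             | left Hc => proj1_sig (fs (proj1_sig (constructive_indefinite_description _ Hc))) c
             | right _ => Some z0 end).
  assert (sx : bounded_support RK RLp x).
  { exists bd; intros c hc; unfold x; destruct excluded_middle_informative as [[n hn]|n]; eauto.
    exfalso; apply hc; eapply wo_le_lt_trans; eauto. }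
  exists (exist _ x sx); intros n c hc; simpl; unfold x.
  destruct excluded_middle_informative as [Hn|Hn]; [|exfalso; eauto].
  destruct (constructive_indefinite_description _ Hn) as [k hk]; simpl.
  destruct (le_ge_dec k n) as [l|l]; [symmetry; apply (H k n l)|apply (H n k l)]; auto.
Qed.

Lemma Xspace_non_archimedean : non_archimedean op.
Proof.
  exists (fun B => exists f al, forall x, B x <-> cone f al x); split; [|split].
  - intros B [f [al e]]; eapply ord_open_ext; [exact e|apply cone_open].
  - intros U x hU hx; destruct (proj2_sig x) as [g _].
    destruct (open_contains_cone RK RLp woLp U x g hU hx) as [al [_ hs]].
    exists (cone x al); split; [exists x, al; tauto|split; [apply cone_refl|exact hs]].
  - intros B1 B2 [f1 [a1 e1]] [f2 [a2 e2]].
    destruct (cones_disjoint_or_nested RK RLp woLp f1 a1 f2 a2) as [d|[sub|sub]].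
    + left; intros x [h1 h2]; apply (d x); split; [apply e1|apply e2]; assumption.
    + right; left; intros x hx; apply e2, sub, e1, hx.
    + right; right; intros x hx; apply e1, sub, e2, hx.
Qed.

Lemma Xspace_dis_le : dis_le op Lp.
Proof.
  exists (fun g (f : X) => forall b, ~ RLp b g -> exists z, proj1_sig f b = Some z /\ is_zero RK z).
  split; [|intros f; exact (proj2_sig f)].
  intros g f hf; exists (cone f g); split; [apply cone_open|split; [apply cone_refl|]].
  intros y hy dy; apply Xspace_ext; intros b.
  destruct (classic (RLp g b)) as [l|l]; [|apply hy, (wo_not_lt_le _ woLp _ _ l)].
  assert (n : ~ RLp b g) by (intros c; exact (wo_irrefl woLp b (wo_trans woLp _ _ _ c l))).
  destruct (hf b n) as [z1 [e1 z1z]], (dy b n) as [z2 [e2 z2z]].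
  rewrite e1, e2; f_equal; exact (is_zero_unique RK woK _ _ z2z z1z).
Qed.

(* Overwrite [x] at [lambda] coordinates that lie past [al] (hence past its support)
   but below a common bound. *)
Lemma card_le_functions_cone (x : X) g al :
  (forall b, ~ RLp b g -> exists z, proj1_sig x b = Some z /\ is_zero RK z) ->
  le_of RLp g al -> card_le (L -> K) {y | cone x al y}.
Proof.
  intros hg hal.
  destruct (successor_injection_above RL RLp hL hLp al) as [p [pinj [pgt [bd pbd]]]].
  destruct (card_le_nat_infinite RL hL) as [iota _].
  assert (albd : RLp al bd) by exact (wo_trans woLp _ _ _ (pgt (iota 0)) (pbd (iota 0))).
  pose (yf := fun (phi : L -> K) (c : Lp) =>
          match excluded_middle_informative (exists i, p i = c) with
          | left H => Some (phi (proj1_sig (constructive_indefinite_description _ H)))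
          | right _ => proj1_sig x c end).
  assert (supp : forall phi, bounded_support RK RLp (yf phi)).
  { intros phi; exists bd; intros c hc; unfold yf.
    destruct excluded_middle_informative as [[i hi]|n]; [exfalso; apply hc; rewrite <- hi; auto|].
    apply hg; intros c'; apply hc.
    exact (wo_lt_le_trans _ woLp _ _ _ c' (or_introl (wo_le_lt_trans _ woLp _ _ _ hal albd))). }
  assert (incone : forall phi, cone x al (exist _ _ (supp phi))).
  { intros phi b hb; simpl; unfold yf; destruct excluded_middle_informative as [[i hi]|n]; auto.
    exfalso; apply (wo_lt_not_le _ woLp _ _ (pgt i)); rewrite hi; exact hb. }
  exists (fun phi => exist _ (exist _ _ (supp phi)) (incone phi)).
  intros phi psi ee; apply functional_extensionality; intros i.
  apply (f_equal (fun y => proj1_sig (proj1_sig y) (p i))) in ee; simpl in ee; unfold yf in ee.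
  destruct excluded_middle_informative as [H|n]; [|exfalso; eauto].
  destruct (constructive_indefinite_description _ H) as [j hj]; simpl in ee.
  apply pinj in hj; subst; congruence.
Qed.

Lemma Xspace_card_lt_Delta : cof_le RK L -> card_lt_Delta op K.
Proof.
  intros hcf U hU [x hx]; destruct (proj2_sig x) as [g hg].
  destruct (open_contains_cone RK RLp woLp U x g hU hx) as [al [hal hs]].
  pose proof (card_le_functions_cone x g al hg hal) as HF.
  assert (HU : card_le {y | cone x al y} {y | U y}).
  { exists (fun y => exist _ (proj1_sig y) (hs _ (proj2_sig y))).
    intros y y' e; injection e; apply proj1_sig_inj. }
  destruct (card_le_nat_infinite RL hL) as [iota _].
  split.
  - exact (card_le_trans _ _ _ (card_le_fun_const (iota 0) K) (card_le_trans _ _ _ HF HU)).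
  - intros Hle; apply (konig RK hK hcf).
    exact (card_le_trans _ _ _ HF (card_le_trans _ _ _ HU Hle)).
Qed.

(* Player II answers a move [(B, f)] by a cone around [f] inside [B]; the cones of a
   play are nested, so they meet. *)
Lemma Xspace_strong_choquet : strong_choquet op.
Proof.
  assert (Ha : forall q : (X -> Prop) * X, exists al,
             op (fst q) -> fst q (snd q) -> subset (cone (snd q) al) (fst q)).
  { intros [B f]; simpl; destruct (proj2_sig f) as [g _].
    destruct (classic (op B /\ B f)) as [[h1 h2]|N].
    - destruct (open_contains_cone RK RLp woLp B f g h1 h2) as [al [_ hs]]; eauto.
    - exists g; intros h1 h2; exfalso; auto. }
  destruct (choice _ Ha) as [alpha halpha].
  exists (last_move_strategy (fun q => cone (snd q) (alpha q))).
  pose proof (answer_last_move_strategy (fun q => cone (snd q) (alpha q))) as ans; simpl in ans.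
  split.
  - intros b n hl; rewrite ans; destruct (hl n (le_n n)) as [h1 [h2 _]].
    split; [apply cone_open|split; [apply cone_refl|apply halpha; auto]].
  - intros b hl.
    assert (nest : forall n m, n <= m ->
              subset (cone (snd (b m)) (alpha (b m))) (cone (snd (b n)) (alpha (b n)))).
    { apply decreasing_chain_subset; intros k y hy; destruct (hl (S k)) as [h1 [h2 h3]].
      pose proof (h3 k eq_refl) as h4; rewrite ans in h4; apply h4, halpha; auto. }
    destruct (nested_cones_meet (fun n => snd (b n)) (fun n => alpha (b n))) as [x hx].
    + intros n m l; apply (nest n m l), cone_refl.
    + exists x; intros n; rewrite ans; apply hx.
Qed.

Lemma Xspace_baire : baire op.
Proof.
  intros D hD U hU [u hu].
  assert (refine : forall (nq : nat * (X * Lp)), exists q' : X * Lp,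
     cone (fst (snd nq)) (snd (snd nq)) (fst q') /\ le_of RLp (snd (snd nq)) (snd q') /\
     subset (cone (fst q') (snd q')) (D (fst nq))).
  { intros [n [f a]]; simpl; destruct (hD n) as [o d].
    destruct (d (cone f a)) as [y [hy1 hy2]]; [apply cone_open|exists f; apply cone_refl|].
    destruct (open_contains_cone RK RLp woLp (D n) y a o hy2) as [al [hal hs]].
    exists (y, al); auto. }
  destruct (choice _ refine) as [step hstep].
  destruct (proj2_sig u) as [g _].
  destruct (open_contains_cone RK RLp woLp U u g hU hu) as [a [_ hsU]].
  pose (sq := fix sq n := match n with 0 => step (0, (u, a)) | S k => step (S k, sq k) end).
  assert (hsq : forall n, subset (cone (fst (sq n)) (snd (sq n))) (D n)).
  { intros [|n]; exact (proj2 (proj2 (hstep _))). }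
  assert (nest : forall n m, n <= m ->
            subset (cone (fst (sq m)) (snd (sq m))) (cone (fst (sq n)) (snd (sq n)))).
  { apply decreasing_chain_subset; intros n; simpl.
    destruct (hstep (S n, sq n)) as [h1 [h2 _]]; eapply cone_sub; eauto. }
  destruct (nested_cones_meet (fun n => fst (sq n)) (fun n => snd (sq n))) as [x hx].
  { intros n m l; apply (nest n m l), cone_refl. }
  exists x; split; [|intros n; apply hsq, hx].
  apply hsU; destruct (hstep (0, (u, a))) as [h1 [h2 _]].
  exact (cone_sub RK RLp woLp _ _ _ _ h1 h2 _ (hx 0)).
Qed.

End Topology.

Theorem mainTheorem14
  (K : Type) (RK : K -> K -> Prop)       (* kappa *)
  (L : Type) (RL : L -> L -> Prop)       (* lambda *)
  (Lp : Type) (RLp : Lp -> Lp -> Prop)   (* lambda^+ *)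
  (hK : infinite_cardinal RK)
  (hL : infinite_cardinal RL)
  (hLp : successor_cardinal_of L RLp)
  (hcf : cof_le RK L)
  (hLK : card_lt L K) :
  let op := ord_open (lex_lt RK RLp) in
  strict_linear_order (lex_lt RK RLp) /\
  strong_choquet op /\
  baire op /\
  non_archimedean op /\
  dis_le op Lp /\
  card_lt Lp K /\
  card_lt_Delta op K.
Proof.
  intros op.
  refine (conj _ (conj _ (conj _ (conj _ (conj _ (conj (conj _ _) _)))))).
  - exact (lex_lt_strict_linear_order RK RLp (proj1 hK) (proj1 hLp)).
  - exact (Xspace_strong_choquet RK RL RLp hK hL hLp).
  - exact (Xspace_baire RK RL RLp hK hL hLp).
  - exact (Xspace_non_archimedean RK RL RLp hK hL hLp).
  - exact (Xspace_dis_le RK RL RLp hK hL hLp).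
  - exact (card_le_successor RLp hLp RK (proj1 hK) hLK).
  - exact (not_card_le_successor RL RLp hL hLp RK hK hcf hLK).
  - exact (Xspace_card_lt_Delta RK RL RLp hK hL hLp hcf).
Qed.
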